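(* Let $\mathcal H$ be a real Hilbert space with inner product $\langle\cdot,\cdot\rangle$ and norm $\|\cdot\|$. Let $A, L_1, L_2$ be bounded linear operators on $\mathcal H$ and $b\in\mathcal H$, and define $$E(u)=\tfrac12\|Au-b\|^2,\qquad J_i(\mu)=\tfrac12\|L_i\mu\|^2\ (i=1,2),\qquad J(\mu)=J_1(\mu)-J_2(\mu),$$ where it is assumed that there is a bounded linear operator $L$ on $\mathcal H$ with $L^*L=L_1^*L_1-L_2^*L_2$, so that $J(\mu)=\tfrac12\|L\mu\|^2$. Fix $\delta t>0$. Let $(u^n,\mu^n,r^n)_{n\ge 0}\subset \mathcal H\times\mathcal H\times\mathbb R$ be a sequence satisfying, for every $n\ge0$ (with $J_2(\mu^n)>0$ so that the scheme is defined), $$\begin{cases}\dfrac{u^{n+1}-u^n}{\delta t} = -L_1^*L_1\mu^{n+1}+\dfrac{r^{n+1}}{\sqrt{J_2(\mu^n)}}\,L_2^*L_2\mu^n,\\[2mm] r^{n+1}-r^n=\dfrac{1}{2\sqrt{J_2(\mu^n)}}\langle L_2\mu^n, L_2(\mu^{n+1}-\mu^n)\rangle,\\[2mm] \mu^{n+1}=\nabla E(u^{n+1}),\end{cases}$$ with initial data satisfying $\mu^0=\nabla E(u^0)$ and $r^0=\sqrt{J_2(\mu^0)}$. Then: (i) for every $n\in\mathbb N$, if $r^{n+1}\ge 0$ then $E(u^{n+1})\le E(u^n)$; (ii) the functional $\tilde J(\mu,r):=\tfrac12\|L_1\mu\|^2-r^2$ satisfies $\tilde J(\mu^{n+1},r^{n+1})\le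 \tilde J(\mu^n,r^n)$ for every $n\in\mathbb N$.
   Context: $L_i^*$ denotes the Hilbert adjoint of $L_i$; $\nabla E(u)=A^*(Au-b)$ is the gradient of $E$ in $\mathcal H$. This is the first-order ''mobility SAV'' scheme for the gradient flow $u_t=-\nabla J(\mu)$, $\mu=\nabla E(u)$, where the scalar auxiliary variable $r$ approximates $\sqrt{J_2(\mu)}$. *)

From HB Require Import structures.
From mathcomp Require Import all_boot all_order all_algebra.
From mathcomp Require Import all_classical all_reals all_analysis.
Set Implicit Arguments. Unset Strict Implicit. Unset Printing Implicit Defensive.
Import Order.TTheory GRing.Theory Num.Theory.
Import numFieldNormedType.Exports.
Local Open Scope ring_scope.

Definition is_inner_product (R : realType) (V : normedModType R)
  (ip : V -> V -> R) : Prop :=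
  [/\ (forall x y, ip x y = ip y x),
      (forall (a : R) x y z, ip (a *: x + y) z = a * ip x z + ip y z)
    & (forall x, `|x| ^+ 2 = ip x x)].

Definition is_adjoint (R : realType) (V : normedModType R)
  (ip : V -> V -> R) (T Ts : V -> V) : Prop :=
  forall x y, ip (T x) y = ip x (Ts y).

Definition bounded_op (R : realType) (V : normedModType R) (T : {linear V -> V}) : Prop :=
  continuous T.

Definition Efun (R : realType) (V : normedModType R) (A : V -> V) (b u : V) : R :=
  2^-1 * `|A u - b| ^+ 2.

Definition gradE (R : realType) (V : normedModType R) (A As : V -> V) (b u : V) : V :=
  As (A u - b).

Definition Jq (R : realType) (V : normedModType R) (Li : V -> V) (mu : V) : R :=
  2^-1 * `|Li mu| ^+ 2.

Definition Jtilde (R : realType) (V : normedModType R) (L1 : V -> V) (mu : V) (r : R) : R :=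
  2^-1 * `|L1 mu| ^+ 2 - r ^+ 2.

From HB Require Import structures.
From mathcomp Require Import all_boot all_order all_algebra.
From mathcomp Require Import all_classical all_reals all_analysis.
From mathcomp Require Import ring lra.
Import Order.TTheory GRing.Theory Num.Theory.
Import numFieldNormedType.Exports.
Local Open Scope ring_scope.

(* Write s_n = sqrt (J_2 mu^n), so that ||L_2 mu^n||^2 = 2 s_n^2.  Cauchy-Schwarz
   gives <L_2 mu^n, L_2 mu^(n+1)> <= 2 s_n s_(n+1), and with the r-update this
   yields r^(n+1) - s_(n+1) <= r^n - s_n; since r^0 = s_0, we get r^n <= s_n.
   The Gram identity L^* L = L_1^* L_1 - L_2^* L_2 gives ||L_2 x|| <= ||L_1 x||.
   (i) E is convex, so E(u^(n+1)) - E(u^n) <= <u^(n+1) - u^n, mu^(n+1)>.  Testing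
   the u-equation with mu^(n+1) bounds this by
   dt (2 r^(n+1) s_(n+1) - ||L_1 mu^(n+1)||^2)
     <= dt (||L_2 mu^(n+1)||^2 - ||L_1 mu^(n+1)||^2) <= 0   when r^(n+1) >= 0.
   (ii) Testing with mu^(n+1) - mu^n, whose pairing with u^(n+1) - u^n is
   ||A (u^(n+1) - u^n)||^2 >= 0, and expanding squares gives
   Jt^(n+1) - Jt^n <= (r^(n+1) - r^n)^2 - ||L_1 (mu^(n+1) - mu^n)||^2 / 2,
   which is <= 0 by Cauchy-Schwarz applied to the r-update. *)

Set Implicit Arguments. Unset Strict Implicit.

Lemma sqr_le_mul_of_quadratic_ge0 (R : realFieldType) (a b c : R) : 0 <= a ->
  (forall t, 0 <= t ^+ 2 * a - 2 * t * c + b) -> c ^+ 2 <= a * b.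
Proof.
rewrite le_eqVlt => /predU1P[<- | a_gt0] quad.
  have [->|c_neq0] := eqVneq c 0; first by rewrite expr0n mul0r.
  have := quad ((b + 1) / (2 * c)).
  have -> : 2 * ((b + 1) / (2 * c)) * c = b + 1 by field.
  lra.
have := quad (c / a).
have -> : (c / a) ^+ 2 * a - 2 * (c / a) * c + b = (a * b - c ^+ 2) / a.
  by field; exact: lt0r_neq0.
by rewrite pmulr_lge0 ?invr_gt0 // subr_ge0.
Qed.

Section InnerProduct.
Variables (R : realType) (V : normedModType R) (ip : V -> V -> R).
Hypothesis hip : is_inner_product ip.

Lemma ipC x y : ip x y = ip y x.
Proof. by case: hip. Qed.

Lemma sqr_norm_ip x : `|x| ^+ 2 = ip x x.
Proof. by case: hip. Qed.

Lemma ip0l z : ip 0 z = 0.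
Proof.
case: hip => _ ipDZ _; have := ipDZ (-1) 0 0 z.
by rewrite scaler0 addr0 mulN1r addNr.
Qed.

Lemma ipDl x y z : ip (x + y) z = ip x z + ip y z.
Proof. by case: hip => _ ipDZ _; have := ipDZ 1 x y z; rewrite scale1r mul1r. Qed.

Lemma ipZl a x z : ip (a *: x) z = a * ip x z.
Proof. by case: hip => _ ipDZ _; rewrite -[a *: x]addr0 ipDZ ip0l addr0. Qed.

Lemma ipNl x z : ip (- x) z = - ip x z.
Proof. by rewrite -scaleN1r ipZl mulN1r. Qed.

Lemma ipBl x y z : ip (x - y) z = ip x z - ip y z.
Proof. by rewrite ipDl ipNl. Qed.

Lemma ipBr x y z : ip z (x - y) = ip z x - ip z y.
Proof. by rewrite !(ipC z) ipBl. Qed.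

Lemma sqr_normB x y : `|x - y| ^+ 2 = `|x| ^+ 2 - 2 * ip x y + `|y| ^+ 2.
Proof. rewrite !sqr_norm_ip !ipBl !ipBr (ipC y x); ring. Qed.

Lemma ip_sqr_le x y : ip x y ^+ 2 <= `|x| ^+ 2 * `|y| ^+ 2.
Proof.
apply: sqr_le_mul_of_quadratic_ge0; first exact: sqr_ge0.
move=> t; have := sqr_ge0 `|t *: x - y|.
rewrite sqr_normB normrZ exprMn real_normK ?num_real // ipZl; lra.
Qed.

Lemma ip_adjointl T Ts : is_adjoint ip T Ts -> forall x y, ip (Ts y) x = ip y (T x).
Proof. by move=> adjT x y; rewrite ipC -adjT ipC. Qed.

Lemma sqr_norm_le_gram_sub T T1 T2 Ts T1s T2s :
  is_adjoint ip T Ts -> is_adjoint ip T1 T1s -> is_adjoint ip T2 T2s ->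
  (forall x, Ts (T x) = T1s (T1 x) - T2s (T2 x)) ->
  forall x, `|T2 x| ^+ 2 <= `|T1 x| ^+ 2.
Proof.
move=> adjT adjT1 adjT2 gramT x.
have normT : `|T x| ^+ 2 = `|T1 x| ^+ 2 - `|T2 x| ^+ 2.
  by rewrite !sqr_norm_ip adjT gramT ipBr -adjT1 -adjT2.
by rewrite -subr_ge0 -normT sqr_ge0.
Qed.

Variables (A : {linear V -> V}) (As : V -> V) (b : V).
Hypothesis adjA : is_adjoint ip A As.

Lemma Efun_sub_le_ip_gradE u v :
  Efun A b v - Efun A b u <= ip (v - u) (gradE A As b v).
Proof.
have AuE : A u - b = (A v - b) - A (v - u).
  by rewrite linearB opprB [RHS]addrC addrA subrK.
rewrite /Efun /gradE -adjA AuE (sqr_normB (A v - b)) (ipC (A v - b)).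
have := sqr_ge0 `|A (v - u)|; lra.
Qed.

Lemma ip_sub_gradE u v :
  ip (v - u) (gradE A As b v - gradE A As b u) = `|A (v - u)| ^+ 2.
Proof.
by rewrite ipBr -!adjA -ipBr opprB addrA subrK linearB sqr_norm_ip.
Qed.

End InnerProduct.

Section MobilitySAV.
Variables (R : realType) (V : normedModType R) (ip : V -> V -> R).
Hypothesis hip : is_inner_product ip.
Variables (A L1 L2 : {linear V -> V}) (As L1s L2s : V -> V) (b : V).
Hypotheses (adjA : is_adjoint ip A As) (adjL1 : is_adjoint ip L1 L1s)
  (adjL2 : is_adjoint ip L2 L2s).
Hypothesis normL2_le : forall x, `|L2 x| ^+ 2 <= `|L1 x| ^+ 2.
Variables (dt : R) (u mu : nat -> V) (r : nat -> R).
Hypothesis dt_gt0 : 0 < dt.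
Hypothesis J2_gt0 : forall n, 0 < Jq L2 (mu n).
Hypothesis u_step : forall n, dt^-1 *: (u n.+1 - u n) =
  - L1s (L1 (mu n.+1)) + (r n.+1 / Num.sqrt (Jq L2 (mu n))) *: L2s (L2 (mu n)).
Hypothesis r_step : forall n, r n.+1 - r n =
  (2 * Num.sqrt (Jq L2 (mu n)))^-1 * ip (L2 (mu n)) (L2 (mu n.+1 - mu n)).
Hypothesis muE : forall n, mu n = gradE A As b (u n).
Hypothesis r0E : r 0%N = Num.sqrt (Jq L2 (mu 0%N)).

Let s n := Num.sqrt (Jq L2 (mu n)).

Lemma s_gt0 n : 0 < s n.
Proof. by rewrite sqrtr_gt0. Qed.

Lemma sqr_normL2_mu n : `|L2 (mu n)| ^+ 2 = 2 * s n ^+ 2.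
Proof. by rewrite sqr_sqrtr ?ltW // /Jq mulrA divff ?mul1r ?pnatr_eq0. Qed.

Lemma ip_L2_increment n :
  ip (L2 (mu n)) (L2 (mu n.+1 - mu n)) = 2 * s n * (r n.+1 - r n).
Proof.
by rewrite r_step -/(s n) mulrA mulfV ?mul1r // mulf_neq0 ?pnatr_eq0 ?lt0r_neq0 ?s_gt0.
Qed.

Lemma ip_L2_step_le n : ip (L2 (mu n)) (L2 (mu n.+1)) <= 2 * s n * s n.+1.
Proof.
have := ip_sqr_le hip (L2 (mu n)) (L2 (mu n.+1)).
rewrite !sqr_normL2_mu.
have := mulr_gt0 (s_gt0 n) (s_gt0 n.+1); nra.
Qed.

Lemma r_le_s n : r n <= s n.
Proof.
elim: n => [|n IHn]; first by rewrite r0E.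
have := ip_L2_increment n; rewrite linearB (ipBr hip) -(sqr_norm_ip hip) sqr_normL2_mu.
have := ip_L2_step_le n; have := s_gt0 n; nra.
Qed.

Lemma ip_u_step n w : dt^-1 * ip (u n.+1 - u n) w =
  - ip (L1 (mu n.+1)) (L1 w) + r n.+1 / s n * ip (L2 (mu n)) (L2 w).
Proof.
rewrite -(ipZl hip) u_step (ipDl hip) (ipNl hip) (ipZl hip).
by rewrite (ip_adjointl hip adjL1) (ip_adjointl hip adjL2).
Qed.

Lemma Efun_step_le n : 0 <= r n.+1 -> Efun A b (u n.+1) <= Efun A b (u n).
Proof.
move=> r_ge0; rewrite -subr_le0.
apply: le_trans (Efun_sub_le_ip_gradE hip b adjA _ _) _; rewrite -muE.
have dtV_gt0 : 0 < dt^-1 by rewrite invr_gt0.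
rewrite -(pmulr_rle0 _ dtV_gt0) ip_u_step.
have s_neq0 := lt0r_neq0 (s_gt0 n).
have SAV_term_le : r n.+1 / s n * ip (L2 (mu n)) (L2 (mu n.+1)) <= 2 * r n.+1 * s n.+1.
  have -> : 2 * r n.+1 * s n.+1 = r n.+1 / s n * (2 * s n * s n.+1) by field.
  apply: ler_wpM2l (ip_L2_step_le n).
  exact: divr_ge0 r_ge0 (ltW (s_gt0 n)).
have := r_le_s n.+1; have := s_gt0 n.+1; have := normL2_le (mu n.+1).
rewrite -!(sqr_norm_ip hip) sqr_normL2_mu; nra.
Qed.

Lemma Jtilde_step_le n : Jtilde L1 (mu n.+1) (r n.+1) <= Jtilde L1 (mu n) (r n).
Proof.
set d := mu n.+1 - mu n.
have dissipation : 0 <= dt^-1 * ip (u n.+1 - u n) d.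
  rewrite /d !muE (ip_sub_gradE hip b adjA).
  by apply: mulr_ge0; [rewrite invr_ge0 ltW | exact: sqr_ge0].
rewrite ip_u_step ip_L2_increment in dissipation.
have L1muE : L1 (mu n) = L1 (mu n.+1) - L1 d by rewrite linearB subKr.
have r_incr_le : 2 * (r n.+1 - r n) ^+ 2 <= `|L1 d| ^+ 2.
  apply: le_trans (normL2_le d).
  have := ip_sqr_le hip (L2 (mu n)) (L2 d).
  rewrite ip_L2_increment sqr_normL2_mu.
  have := exprn_gt0 2 (s_gt0 n); nra.
rewrite /Jtilde L1muE (sqr_normB hip).
have s_neq0 := lt0r_neq0 (s_gt0 n).
have SAV_term : r n.+1 / s n * (2 * s n * (r n.+1 - r n)) = 2 * r n.+1 * (r n.+1 - r n).
  by field.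
rewrite SAV_term in dissipation; nra.
Qed.

End MobilitySAV.

Theorem proposition3p1 (R : realType) (V : completeNormedModType R)
  (ip : V -> V -> R) (hip : is_inner_product ip)
  (A L1 L2 : {linear V -> V}) (As L1s L2s : V -> V)
  (hA : bounded_op A) (hL1 : bounded_op L1) (hL2 : bounded_op L2)
  (hAs : is_adjoint ip A As) (hL1s : is_adjoint ip L1 L1s)
  (hL2s : is_adjoint ip L2 L2s)
  (b : V)
  (hL : exists (L : {linear V -> V}) (Ls : V -> V),
      [/\ bounded_op L, is_adjoint ip L Ls &
          forall x, Ls (L x) = L1s (L1 x) - L2s (L2 x)])
  (dt : R) (hdt : 0 < dt)
  (u mu : nat -> V) (r : nat -> R)
  (hJ2 : forall n, 0 < Jq L2 (mu n))
  (hu : forall n, dt^-1 *: (u n.+1 - u n) =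
         - L1s (L1 (mu n.+1))
         + (r n.+1 / Num.sqrt (Jq L2 (mu n))) *: L2s (L2 (mu n)))
  (hr : forall n, r n.+1 - r n =
         (2 * Num.sqrt (Jq L2 (mu n)))^-1 * ip (L2 (mu n)) (L2 (mu n.+1 - mu n)))
  (hmu : forall n, mu n.+1 = gradE A As b (u n.+1))
  (hmu0 : mu 0%N = gradE A As b (u 0%N))
  (hr0 : r 0%N = Num.sqrt (Jq L2 (mu 0%N))) :
  (forall n, 0 <= r n.+1 -> Efun A b (u n.+1) <= Efun A b (u n)) /\
  (forall n, Jtilde L1 (mu n.+1) (r n.+1) <= Jtilde L1 (mu n) (r n)).
Proof.
have muE : forall n, mu n = gradE A As b (u n) by case.
have normL2_le : forall x, `|L2 x| ^+ 2 <= `|L1 x| ^+ 2.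
  have [L [Ls [_ adjL gramL]]] := hL.
  exact: (sqr_norm_le_gram_sub hip adjL hL1s hL2s gramL).
split=> n.
- exact: (Efun_step_le hip hAs hL1s hL2s normL2_le hdt hJ2 hu hr muE hr0).
- exact: (Jtilde_step_le hip hAs hL1s hL2s normL2_le hdt hJ2 hu hr muE n).
Qed.
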